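(* The diagram $\mathcal D_c$ admits a lifting, with respect to the functor $\operatorname{Con}_c$, by a diagram of finite lattices and lattice embeddings.
   Context: Posets are viewed as categories (one morphism $p\to q$ iff $p\leq q$); a $P$-diagram in a category is a functor from $P$. $\operatorname{Con}_c$ is the functor sending a lattice $L$ to its $\{\vee,0\}$-semilattice of compact (finitely generated) congruences, and a lattice homomorphism $f\colon K\to L$ to the map sending a compact congruence $\alpha$ of $K$ to the congruence of $L$ generated by $\{(f(x),f(y)):(x,y)\in\alpha\}$. A $P$-diagram $\mathcal L$ of lattices lifts a $P$-diagram $\mathcal S$ of semilattices if $\operatorname{Con}_c\circ\mathcal L$ and $\mathcal S$ are naturally isomorphic. The diagram $\mathcal D_c$ is indexed by $\mathcal P(\{0,1,2\})$ ordered by inclusion. Let $U=\mathcal P(\{0,1,2,3,4\})$ with union and $\varnothing$. Put $\xi_0=\{0,4\},\xi_1=\{3\},\xi_2=\{2\},\xi_3=\{1,4\}$; $\eta_0=\{0,4\},\eta_1=\{1,4\},\eta_2=\{2\},\eta_3=\{3,4\}$; $\zeta_0=\{0,4\},\zeta_1=\{1\},\zeta_2=\{3\},\zeta_3=\{2,4\}$; $\alpha_0=\{0,1,4\},\beta_0=\{2,3,4\}$; $\alpha_1=\{0,3,4\},\beta_1=\{1,2,4\}$; $\alpha_2=\{0,2,4\},\beta_2=\{1,3,4\}$. Let $T_0$ (resp. $T_1$, $T_2$) be the $\{\vee,0\}$-subsemilattice of $U$ generated by the $\xi_j$ (resp. $\eta_j$, $\zeta_j$), $j<4$; $S_i$ ($i<3$)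 the one generated by $\{\alpha_i,\beta_i\}$; $\mathbf 2=\{\varnothing,\{0,1,2,3,4\}\}$. $\mathcal D_c$ assigns $\mathbf 2$ to $\varnothing$, $S_i$ to $\{i\}$, $T_j$ to $\{0,1,2\}\setminus\{j\}$, $U$ to $\{0,1,2\}$, with inclusion maps. *)

From HB Require Import structures.
From mathcomp Require Import all_boot all_order.
Set Implicit Arguments. Unset Strict Implicit. Unset Printing Implicit Defensive.
Import Order.TTheory.

Section Congruences.
Variables (d : Order.disp_t) (T : finLatticeType d).

Definition is_con (th : {set T * T}) : bool :=
  [&& [forall x : T, (x, x) \in th],
      [forall x : T, forall y : T, ((x, y) \in th) ==> ((y, x) \in th)],
      [forall x : T, forall y : T, forall z : T,
          ((x, y) \in th) && ((y, z) \in th) ==> ((x, z) \in th)] &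
      [forall a : T, forall b : T, forall c : T, forall e : T,
          ((a, b) \in th) && ((c, e) \in th) ==>
          ((Order.meet a c, Order.meet b e) \in th) &&
          ((Order.join a c, Order.join b e) \in th)]].

Definition Cg (A : {set T * T}) : {set T * T} :=
  \bigcap_(th : {set T * T} | is_con th && (A \subset th)) th.

(* Compact (= finitely generated) congruences; T is finite, so every
   subset of T*T is finite. *)
Definition ConC : {set {set T * T}} := [set Cg A | A : {set T * T}].

Definition con_join (a b : {set T * T}) : {set T * T} := Cg (a :|: b).
Definition con_zero : {set T * T} := Cg set0.

End Congruences.

Definition conc_map d (K : finLatticeType d) d' (L : finLatticeType d')
  (f : K -> L) (a : {set K * K}) : {set L * L} :=
  Cg [set (f p.1, f p.2) | p in a].

Definition lattice_embedding d (K : finLatticeType d) d' (L : finLatticeType d')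
  (f : K -> L) : Prop :=
  injective f /\
  (forall x y : K, f (Order.meet x y) = Order.meet (f x) (f y)) /\
  (forall x y : K, f (Order.join x y) = Order.join (f x) (f y)).

Definition s5 (l : seq nat) : {set 'I_5} := [set i : 'I_5 | nat_of_ord i \in l].

Definition subsl_gen (G : {set {set 'I_5}}) : {set {set 'I_5}} :=
  \bigcap_(X : {set {set 'I_5}} |
       [&& set0 \in X, G \subset X &
           [forall a in X, forall b in X, (a :|: b) \in X]]) X.

Definition xi0 := s5 [:: 0; 4]. Definition xi1 := s5 [:: 3].
Definition xi2 := s5 [:: 2].    Definition xi3 := s5 [:: 1; 4].
Definition eta0 := s5 [:: 0; 4]. Definition eta1 := s5 [:: 1; 4].
Definition eta2 := s5 [:: 2].    Definition eta3 := s5 [:: 3; 4].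
Definition zeta0 := s5 [:: 0; 4]. Definition zeta1 := s5 [:: 1].
Definition zeta2 := s5 [:: 3].    Definition zeta3 := s5 [:: 2; 4].
Definition alpha0 := s5 [:: 0; 1; 4]. Definition beta0 := s5 [:: 2; 3; 4].
Definition alpha1 := s5 [:: 0; 3; 4]. Definition beta1 := s5 [:: 1; 2; 4].
Definition alpha2 := s5 [:: 0; 2; 4]. Definition beta2 := s5 [:: 1; 3; 4].

Definition T0 := subsl_gen [set xi0; xi1; xi2; xi3].
Definition T1 := subsl_gen [set eta0; eta1; eta2; eta3].
Definition T2 := subsl_gen [set zeta0; zeta1; zeta2; zeta3].
Definition S0 := subsl_gen [set alpha0; beta0].
Definition S1 := subsl_gen [set alpha1; beta1].
Definition S2 := subsl_gen [set alpha2; beta2].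
Definition Two : {set {set 'I_5}} := [set set0; setT].
Definition U : {set {set 'I_5}} := setT.

(* D_c on objects; indices are subsets of {0,1,2} = 'I_3.  All maps of D_c
   are inclusions into U. *)
Definition Dc (I : {set 'I_3}) : {set {set 'I_5}} :=
  match (inord 0 \in I), (inord 1 \in I), (inord 2 \in I) with
  | false, false, false => Two
  | true,  false, false => S0
  | false, true,  false => S1
  | false, false, true  => S2
  | false, true,  true  => T0
  | true,  false, true  => T1
  | true,  true,  false => T2
  | true,  true,  true  => U
  end.

From HB Require Import structures.
From mathcomp Require Import all_boot all_order.
Set Implicit Arguments. Unset Strict Implicit. Unset Printing Implicit Defensive.
Import Order.TTheory.
Local Open Scope order_scope.

(** Every lattice of the lifting is a sublattice of [LU = N7 * 2^4], where [N7] is a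
    seven-element simple lattice, so that Con [LU] is the Boolean algebra [2^5] with one
    atom per factor.  A finite lattice whose congruence lattice is Boolean is described by
    a congruence basis: prime quotients [lo k < hi k] such that a congruence is determined
    by the set of quotients it collapses; bases of products are disjoint unions.  Pushing
    a congruence of a sublattice into [LU] and reading off the collapsed factors gives a
    [{v,0}]-embedding of its Con_c into [2^5], whose image is spanned by the images of the
    basis quotients.  For each vertex [I] of the cube a sublattice (2, a three-element
    chain, 2^4, a four-element chain times 2, or [LU] itself) is chosen so that these
    images are the generators of [D_c(I)]; as the sublattices increase along the cube,
    the maps of the diagram are inclusions and naturality is automatic. *)

Section Congruences.
Context {d : Order.disp_t} {T : finLatticeType d}.
Implicit Types (th A : {set T * T}).

Definition con_axioms th : Prop :=
  [/\ forall x, (x, x) \in th,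
      forall x y, (x, y) \in th -> (y, x) \in th,
      forall x y z, (x, y) \in th -> (y, z) \in th -> (x, z) \in th,
      forall x y z, (x, y) \in th -> (x `&` z, y `&` z) \in th &
      forall x y z, (x, y) \in th -> (x `|` z, y `|` z) \in th].

Lemma is_conP th : reflect (con_axioms th) (is_con th).
Proof.
apply: (iffP and4P) => [[/forallP r /'forall_forallP s /'forall_'forall_forallP t
    /'forall_'forall_'forall_forallP c] | [r s t m j]].
  have {}c a b c' e : (a, b) \in th -> (c', e) \in th ->
      ((a `&` c', b `&` e) \in th) /\ ((a `|` c', b `|` e) \in th).
    by move=> ab ce; apply/andP/(implyP (c a b c' e)); rewrite ab ce.
  split=> // [x y|x y z xy yz|x y z xy|x y z xy].
  - exact/implyP.
  - by apply: (implyP (t x y z)); rewrite xy yz.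
  - by case: (c _ _ _ _ xy (r z)).
  - by case: (c _ _ _ _ xy (r z)).
split.
- exact/forallP.
- by apply/forallP=> x; apply/forallP=> y; apply/implyP/s.
- apply/forallP=> x; apply/forallP=> y; apply/forallP=> z.
  by apply/implyP=> /andP[]; apply: t.
apply/forallP=> x; apply/forallP=> b; apply/forallP=> c; apply/forallP=> e.
apply/implyP=> /andP[xb ce].
apply/andP; split.
- apply: (t _ (b `&` c)); first exact: m.
  by rewrite ![b `&` _]meetC; apply: m.
- apply: (t _ (b `|` c)); first exact: j.
  by rewrite ![b `|` _]joinC; apply: j.
Qed.

Lemma bigcap_con (I : finType) (P : pred I) (F : I -> {set T * T}) :
  (forall i, P i -> is_con (F i)) -> is_con (\bigcap_(i | P i) F i).
Proof.
move=> conF; have conFi i Pi := is_conP _ (conF i Pi).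
apply/is_conP; split=> [x|x y /bigcapP xy|x y z /bigcapP xy /bigcapP yz|x y z /bigcapP xy|
    x y z /bigcapP xy]; apply/bigcapP=> i Pi; have [r s t m j] := conFi i Pi.
- exact: r.
- exact/s/xy.
- exact: t (xy i Pi) (yz i Pi).
- exact/m/xy.
- exact/j/xy.
Qed.

Lemma Cg_con A : is_con (Cg A).
Proof. by apply: bigcap_con => th /andP[]. Qed.

Lemma sub_Cg A : A \subset Cg A.
Proof. by apply/subsetP=> p pA; apply/bigcapP=> th /andP[_ /subsetP]; apply. Qed.

Lemma Cg_min A th : is_con th -> A \subset th -> Cg A \subset th.
Proof. by move=> conth Ath; apply: bigcap_inf; rewrite conth. Qed.

Lemma Cg_id th : is_con th -> Cg th = th.
Proof. by move=> conth; apply/eqP; rewrite eqEsubset Cg_min ?sub_Cg. Qed.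

Lemma mem_ConC th : (th \in ConC T) = is_con th.
Proof.
apply/imsetP/idP=> [[A _ ->]|conth]; first exact: Cg_con.
by exists th; rewrite ?Cg_id.
Qed.

End Congruences.

Section Homomorphisms.
Context {d d' : Order.disp_t} {K : finLatticeType d} {L : finLatticeType d'}.
Variable g : K -> L.
Hypotheses (gM : {morph g : x y / x `&` y}) (gJ : {morph g : x y / x `|` y}).

Lemma preim_con (th : {set L * L}) :
  is_con th -> is_con [set p | (g p.1, g p.2) \in th].
Proof.
case/is_conP=> r s t m j; apply/is_conP.
split=> [x|x y|x y z|x y z|x y z]; rewrite !inE ?gM ?gJ;
  [exact: r | exact: s | exact: t | exact: m | exact: j].
Qed.

Lemma Cg_sub_preim (A : {set K * K}) (th : {set L * L}) : is_con th ->
  {in A, forall p, (g p.1, g p.2) \in th} ->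
  forall x y, (x, y) \in Cg A -> (g x, g y) \in th.
Proof.
move=> conth Ath x y xy; suff /subsetP/(_ _ xy) : Cg A \subset [set p | (g p.1, g p.2) \in th].
  by rewrite inE.
by apply: Cg_min; [exact: preim_con | apply/subsetP=> p /Ath; rewrite inE].
Qed.

Lemma conc_map_Cg (A : {set K * K}) : conc_map g (Cg A) = conc_map g A.
Proof.
rewrite /conc_map; apply/eqP; rewrite eqEsubset !Cg_min ?Cg_con //.
  apply/subsetP=> _ /imsetP[p pA ->]; apply/(subsetP (sub_Cg _))/imsetP.
  by exists p; rewrite ?(subsetP (sub_Cg A)).
apply/subsetP=> _ /imsetP[[x y] xy ->]; apply: (Cg_sub_preim (Cg_con _) _ xy) => p pA.
by apply/(subsetP (sub_Cg _))/imsetP; exists p.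
Qed.
End Homomorphisms.

Lemma conc_map_comp d1 d2 d3 (K : finLatticeType d1) (L : finLatticeType d2)
    (M : finLatticeType d3) (g : L -> M) (h : K -> L) (a : {set K * K}) :
  {morph g : x y / x `&` y} -> {morph g : x y / x `|` y} ->
  conc_map g (conc_map h a) = conc_map (g \o h) a.
Proof.
move=> gM gJ; rewrite [conc_map h a]/conc_map conc_map_Cg // /conc_map -imset_comp.
by congr Cg; apply: eq_imset.
Qed.

Lemma eq_conc_map d d' (K : finLatticeType d) (L : finLatticeType d') (g h : K -> L)
    (a : {set K * K}) :
  g =1 h -> conc_map g a = conc_map h a.
Proof. by move=> eq_gh; congr Cg; apply: eq_imset => p; rewrite !eq_gh. Qed.

Section Closure.
Context {d : Order.disp_t} {T : finLatticeType d}.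
Variable U : seq T.

(* One round of the congruence closure rules, kept inside the pairs of [U].  Only
   soundness is needed below, so no fixpoint is ever certified. *)
Definition cg_step (s : seq (T * T)) : seq (T * T) :=
  let derived := s ++ [seq (p.2, p.1) | p <- s]
    ++ [seq (p.1, q.2) | p <- s, q <- [seq q <- s | p.2 == q.1]]
    ++ [seq (p.1 `&` z, p.2 `&` z) | p <- s, z <- U]
    ++ [seq (p.1 `|` z, p.2 `|` z) | p <- s, z <- U] in
  [seq p <- [seq (x, y) | x <- U, y <- U] | (p.1 == p.2) || (p \in derived)].

Lemma cg_step_sound (A : {set T * T}) s :
  {subset s <= Cg A} -> {subset cg_step s <= Cg A}.
Proof.
have [r sy t m j] := is_conP _ (Cg_con A).
move=> sA [x y]; rewrite mem_filter /= !mem_cat => /andP[+ _].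
case/orP=> [/eqP->//|]; case/or4P=> [/sA //|/mapP[[y' x'] /sA /sy yx [-> ->]]//||].
  case/allpairsPdep=> -[x' y'] [[y'' z] [/sA xy]].
  by rewrite mem_filter => /andP[/eqP/= <- /sA yz] [-> ->]; apply: t yz.
by case/orP=> /allpairsP[[[x' y'] w] [/sA xy _ [-> ->]]]; [apply: m | apply: j].
Qed.

Fixpoint cg_reach n s p : bool :=
  if p \in s then true else if n is n'.+1 then cg_reach n' (cg_step s) p else false.

Lemma cg_reach_sound (A : {set T * T}) n s p :
  {subset s <= A} -> cg_reach n s p -> p \in Cg A.
Proof.
move=> sA; have {sA} : {subset s <= Cg A} by move=> q /sA; apply/subsetP/sub_Cg.
elim: n s => [|n IHn] s sA /=; case: ifP => [/sA //|_] //.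
exact/IHn/cg_step_sound.
Qed.
End Closure.

Section ConBasis.
Context {d : Order.disp_t} {T : finLatticeType d}.

(* Con T is then the Boolean algebra of subsets of [cb_lab]: see [labels_con_of] and
   [con_of_labels]. *)
Record con_basis := ConBasis {
  cb_lab : finType;
  cb_rel : cb_lab -> rel T;
  cb_lo : cb_lab -> T;
  cb_hi : cb_lab -> T;
  cb_relP : forall k, is_con [set p | cb_rel k p.1 p.2];
  cb_sep : forall k j, cb_rel j (cb_lo k) (cb_hi k) = (j != k);
  cb_collapse : forall x y k, ~~ cb_rel k x y -> (cb_lo k, cb_hi k) \in Cg [set (x, y)];
  cb_span : forall x y,
    (x, y) \in Cg [set (cb_lo k, cb_hi k) | k in [set k | ~~ cb_rel k x y]] }.
Arguments cb_rel : clear implicits.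
Arguments cb_lo : clear implicits.
Arguments cb_hi : clear implicits.
Arguments cb_relP : clear implicits.

Variable P : con_basis.
Local Notation lab := (cb_lab P).
Local Notation rl := (cb_rel P).
Local Notation lo := (cb_lo P).
Local Notation hi := (cb_hi P).
Implicit Types (S : {set lab}) (th : {set T * T}).

Lemma cb_refl k x : rl k x x.
Proof. by have [/(_ x)] := is_conP _ (cb_relP P k); rewrite inE. Qed.

Definition con_of S : {set T * T} := \bigcap_(k | k \notin S) [set p | rl k p.1 p.2].
Definition labels th : {set lab} := [set k | (lo k, hi k) \in th].

Lemma con_ofP S x y : reflect (forall k, k \notin S -> rl k x y) ((x, y) \in con_of S).
Proof. by apply: (iffP bigcapP) => xy k /xy; rewrite inE. Qed.

Lemma con_of_con S : is_con (con_of S).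
Proof. by apply: bigcap_con => k _; apply: cb_relP. Qed.

Lemma con_of_mono S1 S2 : S1 \subset S2 -> con_of S1 \subset con_of S2.
Proof.
move/subsetP=> S12; apply/subsetP=> -[x y] /con_ofP xy; apply/con_ofP=> k kS2.
by apply: xy; apply: contra kS2; apply: S12.
Qed.

Lemma labels_mono th1 th2 : th1 \subset th2 -> labels th1 \subset labels th2.
Proof. by move/subsetP=> th12; apply/subsetP=> k; rewrite !inE; apply: th12. Qed.

Lemma labels_con_of S : labels (con_of S) = S.
Proof.
apply/setP=> k; rewrite inE; apply/con_ofP/idP=> [lohi|kS j jS].
  by apply/negPn/negP=> /lohi; rewrite cb_sep eqxx.
by rewrite cb_sep; apply: contraNneq jS => ->.
Qed.

Lemma con_of_labels th : is_con th -> con_of (labels th) = th.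
Proof.
move=> conth; apply/setP=> -[x y]; apply/con_ofP/idP=> [xy|xy k].
  have seeds_th : [set (lo k, hi k) | k in [set k | ~~ rl k x y]] \subset th.
    apply/subsetP=> q /imsetP[k]; rewrite inE => nxy ->.
    by move/contraNT: (xy k) => /(_ nxy); rewrite inE.
  exact: (subsetP (Cg_min conth seeds_th)) (cb_span P x y).
rewrite inE; apply: contraNT => nxy.
have xy_th : [set (x, y)] \subset th by rewrite sub1set.
exact: (subsetP (Cg_min conth xy_th)) (cb_collapse nxy).
Qed.

Lemma labels_join a b : is_con a -> is_con b ->
  labels (con_join a b) = labels a :|: labels b.
Proof.
move=> cona conb; apply/eqP; rewrite eqEsubset; apply/andP; split.
  have: con_join a b \subset con_of (labels a :|: labels b).
    rewrite Cg_min ?con_of_con // subUset; apply/andP; split.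
      by rewrite -{1}(con_of_labels cona) con_of_mono ?subsetUl.
    by rewrite -{1}(con_of_labels conb) con_of_mono ?subsetUr.
  by move/labels_mono; rewrite labels_con_of.
by rewrite subUset !labels_mono // (subset_trans _ (sub_Cg _)) ?subsetUl ?subsetUr.
Qed.

Lemma labels_zero : labels (con_zero T) = set0.
Proof.
have: con_zero T \subset con_of set0 by rewrite Cg_min ?con_of_con ?sub0set.
by move/labels_mono; rewrite labels_con_of subset0 => /eqP.
Qed.

Lemma labels_inj : {in ConC T &, injective labels}.
Proof.
move=> a b; rewrite !mem_ConC => cona conb eq_ab.
by rewrite -(con_of_labels cona) -(con_of_labels conb) eq_ab.
Qed.
End ConBasis.
Arguments con_basis {d} T.
Arguments cb_rel {d T} c.
Arguments cb_lo {d T} c.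
Arguments cb_hi {d T} c.
Arguments cb_relP {d T} c.
Arguments con_of {d T} P S.

Section ProductBasis.
Context {dA dB : Order.disp_t} {A : finTBLatticeType dA} {B : finTBLatticeType dB}.
Variables (PA : con_basis A) (PB : con_basis B).
Local Notation AB := (A *p B)%type.
Local Notation lab := (cb_lab PA + cb_lab PB)%type.

Definition prod_rel (k : lab) : rel AB := fun x y =>
  match k with inl k => cb_rel PA k x.1 y.1 | inr k => cb_rel PB k x.2 y.2 end.
Definition prod_lo (k : lab) : AB :=
  match k with inl k => (cb_lo PA k, \bot) | inr k => (\bot, cb_lo PB k) end.
Definition prod_hi (k : lab) : AB :=
  match k with inl k => (cb_hi PA k, \bot) | inr k => (\bot, cb_hi PB k) end.

Let inl_emb (a : A) : AB := (a, \bot).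
Let inr_emb (b : B) : AB := (\bot, b).
Let inl_meet : {morph inl_emb : x y / x `&` y}.
Proof. by move=> x y; rewrite /inl_emb meetEprod meetxx. Qed.
Let inl_join : {morph inl_emb : x y / x `|` y}.
Proof. by move=> x y; rewrite /inl_emb joinEprod joinxx. Qed.
Let inr_meet : {morph inr_emb : x y / x `&` y}.
Proof. by move=> x y; rewrite /inr_emb meetEprod meetxx. Qed.
Let inr_join : {morph inr_emb : x y / x `|` y}.
Proof. by move=> x y; rewrite /inr_emb joinEprod joinxx. Qed.

Lemma prod_relP k : is_con [set p | prod_rel k p.1 p.2].
Proof.
case: k => k.
  have := @preim_con _ _ AB A fst (fun _ _ => erefl) (fun _ _ => erefl) _ (cb_relP PA k).
  by congr is_con; apply/setP=> p; rewrite !inE.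
have := @preim_con _ _ AB B snd (fun _ _ => erefl) (fun _ _ => erefl) _ (cb_relP PB k).
by congr is_con; apply/setP=> p; rewrite !inE.
Qed.

Lemma prod_sep k j : prod_rel j (prod_lo k) (prod_hi k) = (j != k).
Proof. by case: k => k; case: j => j //=; rewrite ?cb_sep ?cb_refl. Qed.

Lemma prod_collapse x y k :
  ~~ prod_rel k x y -> (prod_lo k, prod_hi k) \in Cg [set (x, y)].
Proof.
have xy_th : (x, y) \in Cg [set (x, y)] by rewrite (subsetP (sub_Cg _)) ?set11.
have [_ _ _ m _] := is_conP _ (Cg_con [set (x, y)]).
case: k => k nxy.
  have xy1 : (inl_emb x.1, inl_emb y.1) \in Cg [set (x, y)].
    have := m _ _ (x.1 `|` y.1, \bot) xy_th.
    by rewrite !meetEprod /= joinKI joinKIC !meetx0.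
  apply: (Cg_sub_preim inl_meet inl_join (Cg_con _) _ (cb_collapse nxy)).
  by move=> _ /set1P ->.
have xy2 : (inr_emb x.2, inr_emb y.2) \in Cg [set (x, y)].
  have := m _ _ (\bot, x.2 `|` y.2) xy_th.
  by rewrite !meetEprod /= joinKI joinKIC !meetx0.
apply: (Cg_sub_preim inr_meet inr_join (Cg_con _) _ (cb_collapse nxy)).
by move=> _ /set1P ->.
Qed.
Lemma prod_span x y :
  (x, y) \in Cg [set (prod_lo k, prod_hi k) | k in [set k | ~~ prod_rel k x y]].
Proof.
set th := Cg _; have [_ _ t _ j] := is_conP th (Cg_con _).
have seed_th k : ~~ prod_rel k x y -> (prod_lo k, prod_hi k) \in th.
  by move=> nk; apply/(subsetP (sub_Cg _))/imsetP; exists k; rewrite ?inE.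
have xy1 : (inl_emb x.1, inl_emb y.1) \in th.
  apply: (Cg_sub_preim inl_meet inl_join (Cg_con _) _ (cb_span PA x.1 y.1)).
  by move=> q /imsetP[k]; rewrite inE => nk ->; apply: (seed_th (inl k)).
have xy2 : (inr_emb x.2, inr_emb y.2) \in th.
  apply: (Cg_sub_preim inr_meet inr_join (Cg_con _) _ (cb_span PB x.2 y.2)).
  by move=> q /imsetP[k]; rewrite inE => nk ->; apply: (seed_th (inr k)).
have := j _ _ (inr_emb x.2) xy1; have := j _ _ (inl_emb y.1) xy2.
rewrite /inl_emb /inr_emb !joinEprod /= !joinx0 !join0x => h2 h1.
by move: (t _ _ _ h1 h2); rewrite -!surjective_pairing.
Qed.

Definition prod_basis : con_basis AB :=
  ConBasis prod_relP prod_sep prod_collapse prod_span.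
End ProductBasis.

Section ConcMapLabels.
Context {d d' : Order.disp_t} {K : finLatticeType d} {L : finLatticeType d'}.
Variables (PK : con_basis K) (PL : con_basis L) (g : K -> L).

Definition collapsed (k : cb_lab PK) : {set cb_lab PL} :=
  [set j | ~~ cb_rel PL j (g (cb_lo PK k)) (g (cb_hi PK k))].

Hypothesis g_reflect : forall x y j, ~~ cb_rel PL j (g x) (g y) ->
  exists2 k, ~~ cb_rel PK k x y & j \in collapsed k.

Lemma labels_conc_map a : is_con a ->
  labels PL (conc_map g a) = \bigcup_(k in labels PK a) collapsed k.
Proof.
move=> cona; apply/eqP; rewrite eqEsubset; apply/andP; split.
  have: conc_map g a \subset con_of PL (\bigcup_(k in labels PK a) collapsed k).
    rewrite Cg_min ?con_of_con //.
    apply/subsetP=> _ /imsetP[[x y] xy ->]; apply/con_ofP=> j /= nj.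
    apply/negPn/negP=> /g_reflect[k nk jk]; case/negP: nj; apply/bigcupP; exists k => //.
    move: xy; rewrite -{1}(con_of_labels PK cona) => /con_ofP xy.
    by move/contraNT: (xy k) => /(_ nk).
  by move/(labels_mono PL); rewrite labels_con_of.
apply/subsetP=> j /bigcupP[k]; rewrite !inE => lohi nj.
have sub : [set (g (cb_lo PK k), g (cb_hi PK k))] \subset conc_map g a.
  by rewrite sub1set (subsetP (sub_Cg _)) //; apply/imsetP; exists (cb_lo PK k, cb_hi PK k).
exact: (subsetP (Cg_min (Cg_con _) sub)) (cb_collapse nj).
Qed.
End ConcMapLabels.
Arguments collapsed {d d' K L} PK PL g k.

(* Explicit enumerations, since [enum] and [card] are locked and do not reduce under
   [vm_compute]; for the same reason [ord_list] avoids the opaque [insub] of [ord_enum]. *)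
Record listing (T : eqType) := Listing { elems : seq T; elemsP : forall x, x \in elems }.
Arguments Listing {T}.

Lemma mem_unit_list (x : unit) : x \in [:: tt]. Proof. by case: x. Qed.
Lemma mem_bool_list (x : bool) : x \in [:: false; true]. Proof. by case: x. Qed.

Definition unit_listing : listing unit := Listing _ mem_unit_list.
Definition bool_listing : listing bool := Listing _ mem_bool_list.

Definition ord_list n : seq 'I_n :=
  pmap (fun i => match (i < n)%N as b return (i < n)%N = b -> option 'I_n with
                 | true => fun lt_i_n => Some (Ordinal lt_i_n)
                 | false => fun _ => None end erefl)
       (iota 0 n).

Lemma mem_ord_list n (i : 'I_n) : i \in ord_list n.
Proof.
rewrite mem_pmap; apply/mapP; exists (val i); first by rewrite mem_iota ltn_ord.
case: i => i lt_i_n /=; apply: (_ : forall b (e : (i < n)%N = b), _ = (if b as b'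
  return (i < n)%N = b' -> option 'I_n then fun h => Some (Ordinal h) else fun _ => None) e).
by case=> e; [congr Some; apply: val_inj | exfalso; move: lt_i_n; rewrite e].
Qed.

Definition ord_listing n : listing 'I_n := Listing (ord_list n) (@mem_ord_list n).

Section ListingQuantifiers.
Variables (T : eqType) (L : listing T).

Lemma all_elems (P : pred T) : all P (elems L) -> forall x, P x.
Proof. by move/allP=> allP x; apply/allP/elemsP. Qed.

Lemma all_elems2 (P : T -> pred T) :
  all (fun x => all (P x) (elems L)) (elems L) -> forall x y, P x y.
Proof. by move=> all_P x; apply: all_elems; apply: all_elems all_P x. Qed.

Lemma all_elems3 (P : T -> T -> pred T) :
  all (fun x => all (fun y => all (P x y) (elems L)) (elems L)) (elems L) ->
  forall x y z, P x y z.
Proof. by move=> all_P x y; apply: all_elems; apply: all_elems2 all_P x y. Qed.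
End ListingQuantifiers.

Section ListingConstructions.
Variables (T1 T2 : eqType) (L1 : listing T1) (L2 : listing T2).

Lemma mem_prod_elems x : x \in [seq (a, b) | a <- elems L1, b <- elems L2].
Proof. by case: x => a b; apply/allpairsP; exists (a, b); rewrite !elemsP. Qed.

Lemma mem_sum_elems x : x \in map inl (elems L1) ++ map inr (elems L2).
Proof. by case: x => a; rewrite mem_cat map_f ?elemsP ?orbT. Qed.

Definition prod_listing : listing (T1 * T2)%type := Listing _ mem_prod_elems.
Definition sum_listing : listing (T1 + T2)%type := Listing _ mem_sum_elems.
End ListingConstructions.

Section DecidedBasis.
Context {d : Order.disp_t} {T : finLatticeType d}.
Variables (UT : listing T) (lab : finType) (UL : listing lab).
Variables (rl : lab -> rel T) (lo hi : lab -> T) (n : nat).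
Local Notation U := (elems UT).

Definition con_rel_check (r : rel T) : bool :=
  all (fun x => r x x && all (fun y => (r x y ==> r y x) && all (fun z =>
      [&& r x y && r y z ==> r x z, r x y ==> r (x `&` z) (y `&` z)
        & r x y ==> r (x `|` z) (y `|` z)]) U) U) U.

Lemma con_rel_checkP r : con_rel_check r -> is_con [set p | r p.1 p.2].
Proof.
move=> check; have checkx x := allP check x (elemsP UT x).
have checkxy x y := allP (proj2 (andP (checkx x))) y (elemsP UT y).
have checkxyz x y z := and3P (allP (proj2 (andP (checkxy x y))) z (elemsP UT z)).
apply/is_conP; split=> [x|x y|x y z|x y z|x y z]; rewrite !inE /=.
- by case/andP: (checkx x).
- by apply/implyP; case/andP: (checkxy x y).
- by move=> xy yz; case: (checkxyz x y z) => /implyP-> //; rewrite xy yz.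
- by case: (checkxyz x y z) => _ /implyP.
- by case: (checkxyz x y z) => _ _ /implyP.
Qed.

Definition con_basis_check : bool :=
  [&& all (fun k => con_rel_check (rl k)) (elems UL),
      all (fun k => all (fun j => rl j (lo k) (hi k) == (j != k)) (elems UL)) (elems UL),
      all (fun x => all (fun y => all (fun k =>
         ~~ rl k x y ==> cg_reach U n [:: (x, y)] (lo k, hi k)) (elems UL)) U) U &
      all (fun x => all (fun y =>
         cg_reach U n [seq (lo k, hi k) | k <- elems UL & ~~ rl k x y] (x, y)) U) U].

Hypothesis check : con_basis_check.

Let relP k : is_con [set p | rl k p.1 p.2].
Proof. by case/and4P: check => /allP/(_ k (elemsP UL k))/con_rel_checkP. Qed.

Let sep k j : rl j (lo k) (hi k) = (j != k).
Proof. by case/and4P: check => _ /allP/(_ k (elemsP UL k))/allP/(_ j (elemsP UL j))/eqP. Qed.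

Let collapse x y k : ~~ rl k x y -> (lo k, hi k) \in Cg [set (x, y)].
Proof.
case/and4P: check => _ _ /allP/(_ x (elemsP UT x))/allP/(_ y (elemsP UT y)).
move=> /allP/(_ k (elemsP UL k))/implyP H _ /H; apply: cg_reach_sound => p.
by rewrite inE => /eqP ->; rewrite set11.
Qed.

Let span x y : (x, y) \in Cg [set (lo k, hi k) | k in [set k | ~~ rl k x y]].
Proof.
case/and4P: check => _ _ _ /allP/(_ x (elemsP UT x))/allP/(_ y (elemsP UT y)).
apply: cg_reach_sound => q /mapP[k]; rewrite mem_filter => /andP[nk _] ->.
by apply/imsetP; exists k; rewrite ?inE.
Qed.

Definition decided_basis : con_basis T := ConBasis relP sep collapse span.
End DecidedBasis.

Definition coord_spans (lab : finType) (coords : lab -> seq nat) : {set {set 'I_5}} :=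
  [set \bigcup_(k in S) s5 (coords k) | S : {set lab}].

Section Retract.
Context {d d' : Order.disp_t} {K : finTBLatticeType d} {M : latticeType d'}.
Implicit Type e : K -> M.

Definition retract e (m : M) : K := odflt \bot [pick x | e x == m].

Lemma retract_emb e m : (exists x, e x = m) -> e (retract e m) = m.
Proof. by case=> x <-; rewrite /retract; case: pickP => [y /eqP //|/(_ x)]; rewrite eqxx. Qed.

Lemma retractK e : injective e -> cancel e (retract e).
Proof. by move=> e_inj x; apply: e_inj; rewrite retract_emb //; exists x. Qed.

Lemma retract_embedding d1 (K1 : finLatticeType d1) (e1 : K1 -> M) e :
  {morph e1 : x y / x `&` y} -> {morph e1 : x y / x `|` y} -> injective e1 ->
  {morph e : x y / x `&` y} -> {morph e : x y / x `|` y} -> injective e ->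
  (forall x, exists y, e y = e1 x) -> lattice_embedding (retract e \o e1).
Proof.
move=> e1M e1J e1_inj eM eJ e_inj sub; have ee1 x := retract_emb (sub x).
split; [|split] => x y /=.
- by move/(congr1 e); rewrite !ee1; apply: e1_inj.
- by apply: e_inj; rewrite eM !ee1 e1M.
- by apply: e_inj; rewrite eJ !ee1 e1J.
Qed.
End Retract.

Section EmbeddedLattices.
Context {dM : Order.disp_t} {M : finTBLatticeType dM}.
Variables (PM : con_basis M) (labsM : listing (cb_lab PM)) (coordM : cb_lab PM -> nat).
Local Notation rlM := (cb_rel PM).

(* A finite lattice with its elements, a congruence basis and an embedding into [M];
   [el_coords k] lists the coordinates of [M] that the quotient [k] collapses in [M]. *)
Record elattice := Elattice {
  el_disp : Order.disp_t;
  el_lat : finTBLatticeType el_disp;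
  el_elems : listing el_lat;
  el_basis : con_basis el_lat;
  el_labels : listing (cb_lab el_basis);
  el_emb : el_lat -> M;
  el_coords : cb_lab el_basis -> seq nat }.
Arguments Elattice {el_disp el_lat} el_elems el_basis el_labels el_emb el_coords.
Arguments el_emb : clear implicits.
Arguments el_coords : clear implicits.

Section ElatticeChecks.
Variable D : elattice.
Local Notation U := (elems (el_elems D)).
Local Notation labs := (elems (el_labels D)).
Local Notation e := (el_emb D).
Local Notation P := (el_basis D).
Local Notation coords := (el_coords D).

Definition emb_check : bool :=
  all (fun x => all (fun y => [&& e (x `&` y) == e x `&` e y, e (x `|` y) == e x `|` e y
    & (e x == e y) ==> (x == y)]) U) U.

Definition emb_reflects_check : bool :=
  all (fun x => all (fun y => all (fun j => ~~ rlM j (e x) (e y) ==>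
    has (fun k => ~~ cb_rel P k x y && ~~ rlM j (e (cb_lo P k)) (e (cb_hi P k))) labs)
    (elems labsM)) U) U.

Definition coords_check : bool :=
  all (fun k => all (fun i => (i \in coords k) ==
    has (fun j => ~~ rlM j (e (cb_lo P k)) (e (cb_hi P k)) && (coordM j == i)) (elems labsM))
    (iota 0 5)) labs.

Definition coords_private_check : bool :=
  all (fun k => has (fun i => (i \in coords k) &&
    all (fun k' => (k' == k) || (i \notin coords k')) labs) (iota 0 5)) labs.

Definition elattice_check : bool :=
  [&& emb_check, emb_reflects_check, coords_check & coords_private_check].

Record elattice_spec : Prop := ElatticeSpec {
  emb_meet : {morph e : x y / x `&` y};
  emb_join : {morph e : x y / x `|` y};
  emb_inj : injective e;
  emb_reflects : forall x y j, ~~ rlM j (e x) (e y) ->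
    exists2 k, ~~ cb_rel P k x y & j \in collapsed P PM e k;
  coords_collapsed : forall k (i : 'I_5),
    (val i \in coords k) = [exists j in collapsed P PM e k, coordM j == val i];
  coords_private : forall k, exists i : 'I_5,
    val i \in coords k /\ forall k', val i \in coords k' -> k' = k }.

Lemma elattice_checkP : elattice_check -> elattice_spec.
Proof.
case/and4P=> /allP emb /allP refl /allP coords_ok /allP priv.
have embxy x y := and3P (allP (emb x (elemsP _ x)) y (elemsP _ y)).
split.
- by move=> x y; case: (embxy x y) => /eqP.
- by move=> x y; case: (embxy x y) => _ /eqP.
- by move=> x y exy; case: (embxy x y) => _ _ /implyP/(_ (introT eqP exy))/eqP.
- move=> x y j nj.
  have /allP/(_ j (elemsP _ j))/implyP/(_ nj) := allP (refl x (elemsP _ x)) y (elemsP _ y).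
  by case/hasP=> k _ /andP[nk nj']; exists k; rewrite ?inE.
- move=> k i; rewrite (eqP (allP (coords_ok k (elemsP _ k)) i _)) ?mem_iota ?ltn_ord //.
  apply/hasP/exists_inP=> -[j]; first by move=> _ /andP[nj ij]; exists j; rewrite ?inE.
  by rewrite inE => nj ij; exists j; rewrite ?elemsP ?nj.
- move=> k; case/hasP: (priv k (elemsP _ k)) => i; rewrite mem_iota => /andP[_ lt_i_5].
  case/andP=> ik /allP excl; exists (Ordinal lt_i_5); split=> // k' ik'.
  by move: (excl k' (elemsP _ k')); rewrite ik' /= orbF => /eqP.
Qed.
End ElatticeChecks.

Definition emb_image_sub_check (D1 D2 : elattice) : bool :=
  all (fun x => has (fun y => el_emb D2 y == el_emb D1 x) (elems (el_elems D2)))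
    (elems (el_elems D1)).

Lemma emb_image_subP D1 D2 : emb_image_sub_check D1 D2 ->
  forall x, exists y, el_emb D2 y = el_emb D1 x.
Proof. by move/allP=> sub x; case/hasP: (sub x (elemsP _ x)) => y _ /eqP; exists y. Qed.

Definition id_elattice (UM : listing M) : elattice :=
  Elattice UM PM labsM id (fun j => [:: coordM j]).

Lemma id_elattice_spec UM : injective coordM -> (forall j, coordM j < 5)%N ->
  elattice_spec (id_elattice UM).
Proof.
move=> coord_inj coord_lt5.
have collapsed_id k : collapsed PM PM id k = [set k].
  by apply/setP=> j; rewrite !inE cb_sep negbK.
split=> // [x y j nj|k i|k].
- by exists j; rewrite // collapsed_id set11.
- rewrite collapsed_id !inE; apply/eqP/exists_inP=> [->|[j /set1P-> /eqP<-//]].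
  by exists k; rewrite ?set11.
- exists (Ordinal (coord_lt5 k)); rewrite inE; split=> // k'.
  by rewrite inE => /eqP/coord_inj.
Qed.

Definition coord_image (D : elattice) (a : {set el_lat D * el_lat D}) : {set 'I_5} :=
  \bigcup_(j in labels PM (conc_map (el_emb D) a)) s5 [:: coordM j].
Arguments coord_image : clear implicits.

Section CoordImage.
Variable D : elattice.
Hypothesis spec : elattice_spec D.
Local Notation P := (el_basis D).
Local Notation coords := (el_coords D).

Lemma coord_imageE a : is_con a ->
  coord_image D a = \bigcup_(k in labels P a) s5 (coords k).
Proof.
move=> cona; rewrite /coord_image (labels_conc_map (emb_reflects spec)) //.
apply/setP=> i; apply/bigcupP/bigcupP=> [[j /bigcupP[k ka jk]]|[k ka]].
  rewrite !inE => /eqP ij; exists k; rewrite // inE (coords_collapsed spec).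
  by apply/exists_inP; exists j => //; apply/eqP; rewrite -ij.
rewrite inE (coords_collapsed spec) => /exists_inP[j jk /eqP ij].
by exists j; [apply/bigcupP; exists k | rewrite !inE ij].
Qed.

Lemma coords_bigcup_inj :
  injective (fun S : {set cb_lab P} => \bigcup_(k in S) s5 (coords k)).
Proof.
move=> S1 S2 /= eqS; apply/setP=> k; have [i [ik ipriv]] := coords_private spec k.
suff mem_i (S : {set cb_lab P}) : (i \in \bigcup_(k' in S) s5 (coords k')) = (k \in S).
  by rewrite -!mem_i eqS.
apply/bigcupP/idP=> [[k' k'S]|kS]; last by exists k; rewrite ?inE.
by rewrite inE => /ipriv <-.
Qed.

Lemma coord_image_inj : {in ConC (el_lat D) &, injective (coord_image D)}.
Proof.
move=> a b aC bC eqab; apply: (labels_inj aC bC); apply: coords_bigcup_inj.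
by rewrite /= -!coord_imageE -?mem_ConC.
Qed.

Lemma coord_image_join a b : a \in ConC (el_lat D) -> b \in ConC (el_lat D) ->
  coord_image D (con_join a b) = coord_image D a :|: coord_image D b.
Proof.
rewrite !mem_ConC => cona conb.
by rewrite !coord_imageE ?Cg_con // labels_join // bigcup_setU.
Qed.

Lemma coord_image_zero : coord_image D (con_zero (el_lat D)) = set0.
Proof. by rewrite coord_imageE ?Cg_con // labels_zero big_set0. Qed.

Lemma coord_image_spans a : a \in ConC (el_lat D) -> coord_image D a \in coord_spans coords.
Proof. by rewrite mem_ConC => cona; apply/imsetP; exists (labels P a); rewrite ?coord_imageE. Qed.

Lemma coord_spans_image s : s \in coord_spans coords ->
  exists2 a, a \in ConC (el_lat D) & coord_image D a = s.
Proof.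
case/imsetP=> S _ ->; exists (con_of P S); rewrite ?mem_ConC ?con_of_con //.
by rewrite coord_imageE ?con_of_con ?labels_con_of.
Qed.
End CoordImage.

Lemma elattice_retract_embedding (D1 D2 : elattice) :
  elattice_spec D1 -> elattice_spec D2 -> (forall x, exists y, el_emb D2 y = el_emb D1 x) ->
  lattice_embedding (retract (el_emb D2) \o el_emb D1).
Proof.
case=> e1M e1J e1_inj _ _ _ [e2M e2J e2_inj _ _ _].
exact: retract_embedding.
Qed.

Lemma coord_image_natural (D1 D2 : elattice) (f : el_lat D1 -> el_lat D2) a :
  elattice_spec D2 -> (forall x, el_emb D2 (f x) = el_emb D1 x) ->
  coord_image D2 (conc_map f a) = coord_image D1 a.
Proof.
move=> spec2 ef; rewrite /coord_image conc_map_comp;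
  [|exact: emb_meet spec2 | exact: emb_join spec2].
by rewrite (eq_conc_map _ ef).
Qed.
End EmbeddedLattices.
Arguments elattice {dM} M.
Arguments Elattice {dM M el_disp el_lat} el_elems el_basis el_labels el_emb el_coords.
Arguments el_emb {dM M} e.
Arguments el_coords {dM M} e.
Arguments coord_image {dM M} PM coordM D a.
Arguments id_elattice {dM M} PM labsM coordM UM.
Arguments elattice_check {dM M} PM labsM coordM D.
Arguments elattice_spec {dM M} PM coordM D.

(* Ordinals carry no finTBLatticeType instance. *)
Definition chain n := 'I_n.+1.
HB.instance Definition _ n := Order.FinTotal.copy (chain n) 'I_n.+1.
HB.instance Definition _ n :=
  Order.hasBottom.Build _ (chain n) (leq0n : forall x : chain n, (ord0 <= x)%O).
HB.instance Definition _ n :=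
  Order.hasTop.Build _ (chain n) (@leq_ord n : forall x : chain n, (x <= ord_max)%O).

Definition chain_listing n : listing (chain n) := ord_listing n.+1.
Definition chain_rel n (k : 'I_n) : rel (chain n) := fun x y => (x <= k)%N == (y <= k)%N.
Definition chain_lo n (k : 'I_n) : chain n := widen_ord (leqnSn n) k.
Definition chain_hi n (k : 'I_n) : chain n := lift ord0 k.

Definition N7 := 'I_7.
HB.instance Definition _ := Finite.on N7.

Definition n7 (i : nat) : N7 := nth ord0 (ord_list 7) i.

(* [N7]: bottom 0, top 6, and 1 < 2, 1 < 3; all other pairs are incomparable. *)
Definition n7_le (x y : N7) : bool :=
  [|| val x == 0, val y == 6, x == y | (val x == 1) && ((val y == 2) || (val y == 3))].
Definition n7_meet (x y : N7) : N7 :=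
  if n7_le x y then x else if n7_le y x then y
  else if [&& val x \in [:: 2; 3], val y \in [:: 2; 3] & x != y] then n7 1 else n7 0.
Definition n7_join (x y : N7) : N7 :=
  if n7_le x y then y else if n7_le y x then x else n7 6.

Definition N7_listing : listing N7 := ord_listing 7.

Lemma n7_le_refl : reflexive n7_le.
Proof. by apply: (all_elems (L := N7_listing)); vm_compute. Qed.

Lemma n7_le_anti : antisymmetric n7_le.
Proof.
have anti : forall x y, n7_le x y && n7_le y x ==> (x == y).
  by apply: (all_elems2 (L := N7_listing)); vm_compute.
by move=> x y /(implyP (anti x y))/eqP.
Qed.

Lemma n7_le_trans : transitive n7_le.
Proof.
have trans : forall y x z, n7_le x y && n7_le y z ==> n7_le x z.
  by apply: (all_elems3 (L := N7_listing)); vm_compute.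
by move=> y x z xy yz; apply: (implyP (trans y x z)); rewrite xy yz.
Qed.

Lemma n7_meetP x y z : n7_le x (n7_meet y z) = n7_le x y && n7_le x z.
Proof. by apply/eqP; move: x y z; apply: (all_elems3 (L := N7_listing)); vm_compute. Qed.

Lemma n7_joinP x y z : n7_le (n7_join x y) z = n7_le x z && n7_le y z.
Proof. by apply/eqP; move: x y z; apply: (all_elems3 (L := N7_listing)); vm_compute. Qed.

Lemma n7_le0x x : n7_le (n7 0) x.
Proof. by move: x; apply: (all_elems (L := N7_listing)); vm_compute. Qed.

Lemma n7_lex6 x : n7_le x (n7 6).
Proof. by move: x; apply: (all_elems (L := N7_listing)); vm_compute. Qed.

Fact N7_display : Order.disp_t. Proof. exact: Order.Disp tt tt. Qed.
HB.instance Definition _ :=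
  Order.Le_isPOrder.Build N7_display N7 n7_le_refl n7_le_anti n7_le_trans.
HB.instance Definition _ :=
  Order.POrder_MeetJoin_isLattice.Build N7_display N7 n7_meetP n7_joinP.
HB.instance Definition _ := Order.hasBottom.Build N7_display N7 n7_le0x.
HB.instance Definition _ := Order.hasTop.Build N7_display N7 n7_lex6.

Lemma chain2_check : con_basis_check (chain_listing 2) (ord_listing 2)
  (@chain_rel 2) (@chain_lo 2) (@chain_hi 2) 8.
Proof. by vm_compute. Qed.
Lemma chain3_check : con_basis_check (chain_listing 3) (ord_listing 3)
  (@chain_rel 3) (@chain_lo 3) (@chain_hi 3) 8.
Proof. by vm_compute. Qed.
Lemma bool_check : con_basis_check bool_listing unit_listing
  (fun _ => eq_op) (fun _ => \bot) (fun _ => \top) 8.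
Proof. by vm_compute. Qed.
Lemma N7_check : con_basis_check N7_listing unit_listing
  (fun _ => eq_op) (fun _ => \bot) (fun _ => \top) 8.
Proof. by vm_compute. Qed.

Definition chain2_basis := decided_basis chain2_check.
Definition chain3_basis := decided_basis chain3_check.
Definition bool_basis := decided_basis bool_check.
Definition N7_basis := decided_basis N7_check.

Definition B4 := (bool *p (bool *p (bool *p bool)))%type.
Definition LU := (N7 *p B4)%type.
Definition LT1 := (chain 3 *p bool)%type.

Definition B4_listing : listing B4 :=
  prod_listing bool_listing (prod_listing bool_listing (prod_listing bool_listing bool_listing)).
Definition LU_listing : listing LU := prod_listing N7_listing B4_listing.
Definition LT1_listing : listing LT1 := prod_listing (chain_listing 3) bool_listing.

Definition B4_basis : con_basis B4 :=
  prod_basis bool_basis (prod_basis bool_basis (prod_basis bool_basis bool_basis)).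
Definition LU_basis : con_basis LU := prod_basis N7_basis B4_basis.
Definition LT1_basis : con_basis LT1 := prod_basis chain3_basis bool_basis.

Definition B4_labels : listing (cb_lab B4_basis) :=
  sum_listing unit_listing (sum_listing unit_listing (sum_listing unit_listing unit_listing)).
Definition LU_labels : listing (cb_lab LU_basis) := sum_listing unit_listing B4_labels.
Definition LT1_labels : listing (cb_lab LT1_basis) := sum_listing (ord_listing 3) unit_listing.

Definition LU_coord (j : cb_lab LU_basis) : nat :=
  match j with
  | inl _ => 4 | inr (inl _) => 0 | inr (inr (inl _)) => 1
  | inr (inr (inr (inl _))) => 2 | inr (inr (inr (inr _))) => 3
  end.

Lemma LU_coord_inj : injective LU_coord.
Proof. by do 2![case=> [[]|[[]|[[]|[[]|[]]]]]]. Qed.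

Lemma LU_coord_lt5 j : (LU_coord j < 5)%N.
Proof. by case: j => [[]|[[]|[[]|[[]|[]]]]]. Qed.

Notation LU_elattice := (elattice LU).

Definition mkU (n : nat) (a b c e : bool) : LU := (n7 n, (a, (b, (c, e)))).

Definition chain2_emb (m : LU) (k : chain 2) : LU :=
  if val k == 0 then \bot else if val k == 1 then m else \top.

Definition n7_corner (m : nat) (a b : bool) : nat :=
  if a then (if b then 6 else m) else (if b then 4 else 0).

Definition T0_emb (t : B4) : LU :=
  let: (t0, (t1, (t2, t3))) := t in mkU (n7_corner 1 t0 t3) t0 t3 t2 t1.
Definition T2_emb (t : B4) : LU :=
  let: (t0, (t1, (t2, t3))) := t in mkU (n7_corner 2 t0 t3) t0 t1 t3 t2.
Definition T1_emb (t : LT1) : LU :=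
  let: (k, q) := t in mkU (nth 6 [:: 0; 1; 2] k) (1 <= k)%N (2 <= k)%N q (3 <= k)%N.

Definition S_coords (l0 l1 : seq nat) (k : 'I_2) : seq nat := if val k == 0 then l0 else l1.
Definition B4_coords (l0 l1 l2 l3 : seq nat) (k : cb_lab B4_basis) : seq nat :=
  match k with inl _ => l0 | inr (inl _) => l1 | inr (inr (inl _)) => l2
  | inr (inr (inr _)) => l3 end.
Definition T1_coords (k : cb_lab LT1_basis) : seq nat :=
  match k with inl k => nth [:: 3; 4] [:: [:: 0; 4]; [:: 1; 4]] k | inr _ => [:: 2] end.

Definition el_B : LU_elattice := Elattice bool_listing bool_basis unit_listing
  (fun b : bool => if b then \top else \bot) (fun _ => [:: 0; 1; 2; 3; 4]).
Definition el_S (m : LU) (l0 l1 : seq nat) :=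
  Elattice (M := LU) (chain_listing 2) chain2_basis (ord_listing 2) (chain2_emb m)
    (S_coords l0 l1).
Definition el_T0 : LU_elattice := Elattice B4_listing B4_basis B4_labels T0_emb
  (B4_coords [:: 0; 4] [:: 3] [:: 2] [:: 1; 4]).
Definition el_T1 : LU_elattice := Elattice LT1_listing LT1_basis LT1_labels T1_emb T1_coords.
Definition el_T2 : LU_elattice := Elattice B4_listing B4_basis B4_labels T2_emb
  (B4_coords [:: 0; 4] [:: 1] [:: 3] [:: 2; 4]).
Definition el_U : LU_elattice := id_elattice LU_basis LU_labels LU_coord LU_listing.

Lemma subsl_gen_spans (lab : finType) (f : lab -> {set 'I_5}) (G : {set {set 'I_5}}) :
  (forall k, f k \in G) -> (forall g, g \in G -> exists k, f k = g) ->
  subsl_gen G = [set \bigcup_(k in S) f k | S : {set lab}].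
Proof.
move=> fG Gf; apply/eqP; rewrite eqEsubset; apply/andP; split.
  apply: bigcap_inf; apply/and3P; split.
  - by apply/imsetP; exists set0; rewrite ?big_set0.
  - by apply/subsetP=> g /Gf[k <-]; apply/imsetP; exists [set k]; rewrite ?big_set1.
  apply/forall_inP=> _ /imsetP[S1 _ ->]; apply/forall_inP=> _ /imsetP[S2 _ ->].
  by apply/imsetP; exists (S1 :|: S2); rewrite ?bigcup_setU.
apply/subsetP=> _ /imsetP[S _ ->]; apply/bigcapP=> X /and3P[X0 /subsetP GX /forall_inP XU].
elim/big_rec: _ => // k s _ sX.
exact: (forall_inP (XU _ (GX _ (fG k)))).
Qed.

Lemma S_coords_spans l0 l1 :
  subsl_gen [set s5 l0; s5 l1] = coord_spans (S_coords l0 l1).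
Proof.
apply: subsl_gen_spans => [[[|[|//]] lt_k_2]|g]; rewrite !inE ?eqxx ?orbT //.
by case/orP=> /eqP->; [exists ord0 | exists (Ordinal (isT : (1 < 2)%N))].
Qed.

Lemma B4_coords_spans l0 l1 l2 l3 :
  subsl_gen [set s5 l0; s5 l1; s5 l2; s5 l3] = coord_spans (B4_coords l0 l1 l2 l3).
Proof.
apply: subsl_gen_spans => [[[]|[[]|[[]|[]]]]|g]; rewrite !inE ?eqxx ?orbT //.
rewrite -!orbA => /or4P[]/eqP->;
  by [exists (inl tt) | exists (inr (inl tt)) | exists (inr (inr (inl tt)))
     | exists (inr (inr (inr tt)))].
Qed.

Lemma T1_coords_spans :
  subsl_gen [set s5 [:: 0; 4]; s5 [:: 1; 4]; s5 [:: 2]; s5 [:: 3; 4]] = coord_spans T1_coords.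
Proof.
apply: subsl_gen_spans => [[[[|[|[|//]]] lt_k_3]|[]]|g]; rewrite !inE ?eqxx ?orbT //.
rewrite -!orbA => /or4P[]/eqP->; [exists (inl ord0) | exists (inl (Ordinal (isT : (1 < 3)%N)))
  | exists (inr tt) | exists (inl (Ordinal (isT : (2 < 3)%N)))] => //.
Qed.

Lemma s5_full : s5 [:: 0; 1; 2; 3; 4] = setT.
Proof. by apply/setP=> -[[|[|[|[|[|//]]]]] lt_i_5]; rewrite !inE. Qed.

Lemma Two_spans : Two = coord_spans (fun _ : unit => [:: 0; 1; 2; 3; 4]).
Proof.
apply/setP=> s; rewrite !inE; apply/orP/imsetP=> [[]/eqP->|[S _ ->]].
- by exists set0; rewrite ?big_set0.
- by exists [set tt]; rewrite ?big_set1 ?s5_full.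
have [->|[k kS]] := set_0Vmem S; [by left; rewrite big_set0 | right].
by apply/eqP/setP=> i; rewrite in_setT; apply/bigcupP; exists k; rewrite // s5_full in_setT.
Qed.

Lemma LU_coord_onto (i : 'I_5) : exists j, LU_coord j = val i.
Proof.
case: i => -[|[|[|[|[|//]]]]] lt_i_5; [exists (inr (inl tt)) | exists (inr (inr (inl tt)))
  | exists (inr (inr (inr (inl tt)))) | exists (inr (inr (inr (inr tt)))) | exists (inl tt)] => //.
Qed.

Lemma U_spans : U = coord_spans (fun j : cb_lab LU_basis => [:: LU_coord j]).
Proof.
apply/setP=> s; rewrite !inE; symmetry; apply/imsetP.
exists [set j | [exists i in s, LU_coord j == val i]] => //.
apply/setP=> i; apply/idP/bigcupP=> [i_s|[j]]; last first.
  rewrite !inE => /exists_inP[i' i's /eqP ji'] /eqP ij.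
  by have -> : i = i' by apply: val_inj; rewrite /= ij.
have [j ji] := LU_coord_onto i; exists j; last by rewrite !inE ji.
by rewrite inE; apply/exists_inP; exists i; rewrite ?ji.
Qed.

Definition el_S0 := el_S (mkU 2 true true false false) [:: 0; 1; 4] [:: 2; 3; 4].
Definition el_S1 := el_S (mkU 4 false true true false) [:: 1; 2; 4] [:: 0; 3; 4].
Definition el_S2 := el_S (mkU 1 true false true false) [:: 0; 2; 4] [:: 1; 3; 4].

Definition Dc_lattice (I : {set 'I_3}) : LU_elattice :=
  match inord 0 \in I, inord 1 \in I, inord 2 \in I with
  | false, false, false => el_B
  | true,  false, false => el_S0
  | false, true,  false => el_S1
  | false, false, true  => el_S2
  | false, true,  true  => el_T0
  | true,  false, true  => el_T1
  | true,  true,  false => el_T2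
  | true,  true,  true  => el_U
  end.

Lemma Dc_spans I : Dc I = coord_spans (el_coords (Dc_lattice I)).
Proof.
rewrite /Dc /Dc_lattice.
case: (inord 0 \in I); case: (inord 1 \in I); case: (inord 2 \in I).
- exact: U_spans.
- exact: B4_coords_spans.
- exact: T1_coords_spans.
- exact: S_coords_spans.
- exact: B4_coords_spans.
- by rewrite /S1 setUC; apply: S_coords_spans.
- exact: S_coords_spans.
- exact: Two_spans.
Qed.

Lemma Dc_lattice_spec I : elattice_spec LU_basis LU_coord (Dc_lattice I).
Proof.
rewrite /Dc_lattice.
case: (inord 0 \in I); case: (inord 1 \in I); case: (inord 2 \in I);
  first exact: (id_elattice_spec _ _ LU_coord_inj LU_coord_lt5).
all: by apply: (elattice_checkP (labsM := LU_labels)); vm_compute.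
Qed.

Lemma Dc_lattice_sub (I J : {set 'I_3}) : I \subset J ->
  forall x, exists y, el_emb (Dc_lattice J) y = el_emb (Dc_lattice I) x.
Proof.
move/subsetP=> IJ; apply: emb_image_subP.
have sub i : (inord i \in I) -> (inord i \in J) by apply: IJ.
rewrite /Dc_lattice; move: (sub 0) (sub 1) (sub 2).
case: (inord 0 \in I); case: (inord 1 \in I); case: (inord 2 \in I);
case: (inord 0 \in J); case: (inord 1 \in J); case: (inord 2 \in J) => sub0 sub1 sub2;
  first [exfalso; by move: (sub0 isT) | exfalso; by move: (sub1 isT)
        | exfalso; by move: (sub2 isT) | by vm_compute].
Qed.

Theorem theorem6p1 :
  exists (d : {set 'I_3} -> Order.disp_t)
         (L : forall I : {set 'I_3}, finLatticeType (d I))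
         (f : forall I J : {set 'I_3}, L I -> L J)
         (phi : forall I : {set 'I_3}, {set (L I * L I)} -> {set 'I_5}),
    (forall I J : {set 'I_3}, I \subset J -> lattice_embedding (f I J)) /\
    (forall (I : {set 'I_3}) (x : L I), f I I x = x) /\
    (forall I J K : {set 'I_3}, I \subset J -> J \subset K ->
       forall x : L I, f J K (f I J x) = f I K x) /\
    (forall I : {set 'I_3},
       (forall a : {set (L I * L I)}, a \in ConC (L I) -> phi I a \in Dc I) /\
       {in ConC (L I) &, injective (phi I)} /\
       (forall s : {set 'I_5}, s \in Dc I -> exists2 a, a \in ConC (L I) & phi I a = s) /\
       (forall a b : {set (L I * L I)}, a \in ConC (L I) -> b \in ConC (L I) ->
          phi I (con_join a b) = phi I a :|: phi I b) /\
       phi I (con_zero (L I)) = set0) /\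
    (forall I J : {set 'I_3}, I \subset J -> forall a : {set (L I * L I)}, a \in ConC (L I) ->
       phi J (conc_map (f I J) a) = phi I a).
Proof.
have spec := Dc_lattice_spec.
have emb_retract (I J : {set 'I_3}) x : I \subset J ->
    el_emb (Dc_lattice J) (retract (el_emb (Dc_lattice J)) (el_emb (Dc_lattice I) x)) =
    el_emb (Dc_lattice I) x.
  by move=> IJ; apply/retract_emb/Dc_lattice_sub.
exists (fun I => el_disp (Dc_lattice I)), (fun I => el_lat (Dc_lattice I)).
exists (fun I J x => retract (el_emb (Dc_lattice J)) (el_emb (Dc_lattice I) x)).
exists (fun I => coord_image LU_basis LU_coord (Dc_lattice I)).
split; [|split; [|split; [|split]]].
- move=> I J IJ; exact: elattice_retract_embedding (spec I) (spec J) (Dc_lattice_sub IJ).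
- by move=> I x; rewrite retractK //; apply: emb_inj.
- by move=> I J K IJ JK x; rewrite emb_retract.
- move=> I; rewrite Dc_spans; split; [|split; [|split; [|split]]].
  + exact: coord_image_spans.
  + exact: coord_image_inj.
  + exact: coord_spans_image.
  + exact: coord_image_join.
  + exact: coord_image_zero.
move=> I J IJ a _; apply: coord_image_natural (spec J) _ => x.
exact: emb_retract.
Qed.
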